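(* The sequence $a_k := N_{k,1}$ satisfies $a_1=2$, $a_2=6$, $a_3=14$, and $a_k = 2a_{k-1}+a_{k-2}-2a_{k-3}$ for all $k\ge 4$.
   Context: A $2\times k$ Nurikabe rectangle is a water/land coloring of the $2\times k$ grid of unit squares (columns indexed $1,\dots,k$ from left to right, no identifications) such that the set of water squares is connected under edge-adjacency (empty set counts as connected) and there is no $2\times 2$ block of four water squares. $\mathcal N_{k,1}$ is the set of $2\times k$ Nurikabe rectangles with exactly one water square in column $k$, and $N_{k,1}=|\mathcal N_{k,1}|$. *)

From mathcomp Require Import all_boot.
Set Implicit Arguments. Unset Strict Implicit. Unset Printing Implicit Defensive.

(* A coloring of the 2 x k grid: cell (i, j), row i : 'I_2, column j : 'I_k
   (column j here is column j+1 of the paper); true = water, false = land. *)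
Definition coloring (k : nat) := {ffun 'I_2 * 'I_k -> bool}.

Definition adj (k : nat) : rel ('I_2 * 'I_k) :=
  fun x y =>
    ((x.1 == y.1) && ((x.2.+1 == y.2 :> nat) || (y.2.+1 == x.2 :> nat)))
    || ((x.2 == y.2) && (x.1 != y.1)).

Definition water_adj (k : nat) (f : coloring k) : rel ('I_2 * 'I_k) :=
  fun x y => [&& f x, f y & adj x y].

Definition water_connected (k : nat) (f : coloring k) : bool :=
  [forall x, forall y, (f x && f y) ==> connect (water_adj f) x y].

Definition no_water_pool (k : nat) (f : coloring k) : bool :=
  [forall j : 'I_k, forall j' : 'I_k, (j.+1 == j' :> nat) ==>
     ~~ [forall i : 'I_2, f (i, j) && f (i, j')]].

Definition nurikabe (k : nat) (f : coloring k) : bool :=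
  water_connected f && no_water_pool f.

Definition water_last_col (k : nat) (f : coloring k) : nat :=
  #|[set i : 'I_2 | [exists j : 'I_k, (val j == k.-1) && f (i, j)]]|.

Definition N_k1 (k : nat) : nat :=
  #|[set f : coloring k | nurikabe f && (water_last_col f == 1)]|.

From mathcomp Require Import all_boot all_algebra zify.
Set Implicit Arguments. Unset Strict Implicit. Unset Printing Implicit Defensive.

(* Read a rectangle column by column.  Water can only pass from column j to
   column j+1 through a horizontal edge, so the water squares are connected and
   pool-free exactly when every wet column shares a water row with the next
   column and the two are not both fully wet.  Hence the rectangles of N_{k,1}
   are the words of k column types following these transitions after a prefix
   of dry columns and ending in a column with a single water square.  A
   transfer-matrix count gives N_{k,1} = 2^(k+1) - 2, and both 2^k and 1 satisfy
   the recurrence with characteristic polynomial (x - 2)(x - 1)(x + 1). *)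

Lemma big_tuple_cons (T : finType) n (F : n.+1.-tuple T -> nat) :
  \sum_(t : n.+1.-tuple T) F t = \sum_(x : T) \sum_(t : n.-tuple T) F [tuple of x :: t].
Proof.
rewrite pair_big /= (reindex (fun p : T * n.-tuple T => [tuple of p.1 :: p.2])) //.
exists (fun t : n.+1.-tuple T => (thead t, [tuple of behead t])).
  by move=> [x t] _; congr pair; apply: val_inj.
by move=> t _; rewrite [RHS]tuple_eta; apply: val_inj.
Qed.

(* The content of a column, top square first; true = water. *)
Definition col := (bool * bool)%type.

Definition dry_col : col := (false, false).
Definition wet (c : col) := c.1 || c.2.
Definition single (c : col) := c.1 != c.2.
Definition link (c c' : col) :=
  ((c.1 && c'.1) || (c.2 && c'.2)) && ~~ [&& c.1, c.2, c'.1 & c'.2].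
Definition step (c c' : col) := wet c ==> link c c'.

Lemma single_wet c : single c -> wet c.
Proof. by case: c => [[] []]. Qed.

(* The column word [s] read after a column [c]; for [c = dry_col] this allows
   any number of leading dry columns. *)
Definition walk (c : col) (s : seq col) := path step c s && single (last c s).

Definition walks (c : col) n := #|[set t : n.-tuple col | walk c t]|.

Lemma sum_col (F : col -> nat) :
  \sum_(c : col) F c = F (true, false) + F (false, true) + F (true, true) + F dry_col.
Proof.
rewrite (eq_bigr (fun c => F (c.1, c.2))) => [|[] //].
by rewrite -(pair_big xpredT xpredT (fun a b => F (a, b))) /= !big_bool /= /dry_col; lia.
Qed.

Lemma walks0 c : walks c 0 = single c.
Proof.
rewrite /walks (_ : [set t | _] = if single c then [set [tuple]] else set0).
  by case: (single c); rewrite ?cards1 ?cards0.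
by apply/setP=> t; rewrite tuple0 inE /walk /=; case: (single c); rewrite ?inE.
Qed.

Lemma walksS c n : walks c n.+1 = \sum_(c' : col) step c c' * walks c' n.
Proof.
rewrite /walks -sum1dep_card big_mkcond big_tuple_cons; apply: eq_bigr => c' _.
rewrite -sum1dep_card big_distrr [RHS]big_mkcond; apply: eq_bigr => t _ /=.
by rewrite {1}/walk /= -andbA -/(walk c' t); case: (step c c'); case: (walk c' t).
Qed.

Lemma walks_wet n :
  walks (true, false) n + walks (false, true) n + walks (true, true) n = 2 ^ n.+1.
Proof.
elim: n => [|n IHn]; first by rewrite !walks0.
rewrite !walksS !sum_col expnS -IHn /step /=; lia.
Qed.

Lemma walks_dry n : walks dry_col n = 2 ^ n.+1 - 2.
Proof.
elim: n => [|n IHn]; first by rewrite walks0.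
rewrite walksS sum_col /step /= IHn.
have := walks_wet n; have := expn_gt0 2 n; rewrite !expnS; lia.
Qed.

Definition row0 : 'I_2 := ord0.
Definition row1 : 'I_2 := ord_max.

Lemma row_cases (i : 'I_2) : i = row0 \/ i = row1.
Proof. by case: i => [[|[|]]] // ?; [left | right]; apply: val_inj. Qed.

Lemma card_rows (g : pred 'I_2) : #|g| = g row0 + g row1.
Proof.
rewrite -sum1_card big_mkcond !big_ord_recr big_ord0 /=.
by rewrite (_ : widen_ord _ _ = row0) //; apply: val_inj.
Qed.

Section Grid.
Variables (k : nat) (f : coloring k).

Definition column (j : 'I_k) : col := (f (row0, j), f (row1, j)).
Definition columns : k.-tuple col := [tuple column j | j < k].

Lemma wet_columnP j : reflect (exists i, f (i, j)) (wet (column j)).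
Proof.
apply: (iffP orP) => [[] | [i]]; first by exists row0.
  by exists row1.
by case: (row_cases i) => -> ?; [left | right].
Qed.

Lemma single_column_row j i i' : single (column j) -> f (i, j) -> f (i', j) -> i = i'.
Proof.
rewrite /single /=.
by case: (row_cases i) (row_cases i') => [] -> [] -> // + f0 f1; rewrite f0 f1.
Qed.

Lemma last_columns (j : 'I_k) : j = k.-1 :> nat -> last dry_col columns = column j.
Proof.
by move=> jE; rewrite -nth_last size_tuple -jE nth_mktuple.
Qed.

Lemma last_columnsP :
  single (last dry_col columns) -> exists2 j : 'I_k, j = k.-1 :> nat & single (column j).
Proof.
case: (posnP k) => [k0 | k_gt0].
  by rewrite (@size0nil _ columns) // size_tuple.
have jk : k.-1 < k by rewrite prednK.
by exists (Ordinal jk) => //; rewrite -(last_columns (j := Ordinal jk)).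
Qed.

Lemma water_last_col_eq1 : (water_last_col f == 1) = single (last dry_col columns).
Proof.
case: (posnP k) => [k0 | k_gt0].
  rewrite (@size0nil _ columns) ?size_tuple //.
  apply/negbTE; rewrite /water_last_col (_ : [set _ | _] = set0) ?cards0 //.
  by apply/setP => i; rewrite !inE; apply/existsP => -[j]; have := ltn_ord j; lia.
have jk : k.-1 < k by rewrite prednK.
rewrite (last_columns (j := Ordinal jk)) //= /water_last_col.
rewrite (_ : [set _ | _] = [set i | f (i, Ordinal jk)]).
  by rewrite cardsE card_rows /single /=; case: (f _); case: (f _).
apply/setP => i; rewrite !inE; apply/existsP/idP => [[j /andP[/eqP jE]] | fi].
  by rewrite (_ : j = Ordinal jk) //; apply: val_inj.
by exists (Ordinal jk); rewrite eqxx.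
Qed.

Lemma path_columnsP :
  reflect (forall j j' : 'I_k, j.+1 = j' -> step (column j) (column j'))
          (path step dry_col columns).
Proof.
apply: (iffP (pathP dry_col)) => [H j j' jE | H [|i] // ilt].
  have := H j.+1; rewrite -[nth _ (_ :: _) _]/(nth dry_col columns j).
  by rewrite size_tuple jE ltn_ord !nth_mktuple => /(_ isT).
rewrite size_tuple in ilt; have ik : i < k by lia.
rewrite -[nth _ (_ :: _) _]/(nth dry_col columns i).
by rewrite -[i]/(val (Ordinal ik)) -[i.+1]/(val (Ordinal ilt)) !nth_mktuple; apply: H.
Qed.

Lemma water_adj_sym : symmetric (water_adj f).
Proof.
move=> [x1 x2] [y1 y2]; rewrite /water_adj /adj /= andbCA; congr [&& _, _ & _].
by rewrite (eq_sym y1) (eq_sym y2) [(y2.+1 == x2) || _]orbC.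
Qed.

Lemma connect_water_sym : connect_sym (water_adj f).
Proof. exact/sym_connect_sym/water_adj_sym. Qed.

(* The columns [<= j] are closed under water adjacency unless some row is wet in
   both [j] and [j + 1]. *)
Lemma water_crossing x y (j j' : 'I_k) :
  water_connected f -> f x -> f y -> x.2 <= j < y.2 -> j.+1 = j' ->
  exists i, f (i, j) && f (i, j').
Proof.
move=> conn fx fy /andP[xj jy] jE.
apply/existsP/contraT => /existsPn cross.
pose left_of_j := [pred z : 'I_2 * 'I_k | z.2 <= j].
have closed_left : closed (water_adj f) left_of_j.
  apply: (intro_closed connect_water_sym) => -[z1 z2] [w1 w2].
  rewrite /water_adj /adj /= !inE /= => /and3P[fz fw].
  case/orP => [/andP[/eqP zw1 /orP[/eqP zw | /eqP wz]] | /andP[/eqP <- _]] // zj; last by lia.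
  have [zjE | ] := eqVneq (z2 : nat) (j : nat); last by lia.
  have [jz jw] : j = z2 /\ j' = w2 by split; apply: val_inj => //=; lia.
  by move: (cross z1); rewrite jz jw fz zw1 fw.
have := closed_connect closed_left.
move: conn => /forallP/(_ x)/forallP/(_ y)/implyP; rewrite fx fy => /(_ isT) xy.
by move=> /(_ _ _ xy); rewrite !inE xj leqNgt jy.
Qed.

Lemma connect_last_column x :
  (forall j j' : 'I_k, j.+1 = j' -> step (column j) (column j')) -> f x ->
  exists2 y : 'I_2 * 'I_k, y.2 = k.-1 :> nat & f y && connect (water_adj f) x y.
Proof.
move=> steps; move Edist: (k.-1 - x.2) => n.
elim: n x Edist => [|n IHn] [i j] /= dist fij.
  by exists (i, j); rewrite ?fij ?connect0 //=; have := ltn_ord j; lia.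
have jk : j.+1 < k by lia.
have /implyP/(_ (introT (wet_columnP j) (ex_intro _ i fij))) := steps j (Ordinal jk) erefl.
case/andP => /orP shared _.
have [i' /andP[fj fj']] : exists i', f (i', j) && f (i', Ordinal jk).
  by case: shared => ?; [exists row0 | exists row1].
have [y yE /andP[fy conn_y]] := IHn (i', Ordinal jk) (ltac:(rewrite /=; lia)) fj'.
exists y => //; rewrite fy; apply: connect_trans conn_y.
apply: (connect_trans (y := (i', j))).
  have [<- | ii'] := eqVneq i i'; first exact: connect0.
  by apply: connect1; rewrite /water_adj /adj /= fij fj eqxx ii' orbT.
by apply: connect1; rewrite /water_adj /adj /= fj fj' !eqxx.
Qed.

Lemma nurikabe_last1E : nurikabe f && (water_last_col f == 1) = walk dry_col columns.
Proof.
rewrite water_last_col_eq1 /walk /nurikabe.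
apply/idP/idP => [/andP[/andP[conn no_pool] last1] | /andP[/path_columnsP steps last1]];
  rewrite last1 andbT; have [jl jlE single_jl] := last_columnsP last1.
  have /wet_columnP [r fr] := single_wet single_jl.
  apply/path_columnsP => j j' jE; apply/implyP => /wet_columnP [i fi].
  have jl_j : j < jl by have := ltn_ord j'; lia.
  have [i' shared] : exists i', f (i', j) && f (i', j').
    by apply: (water_crossing (x := (i, j)) (y := (r, jl))) => //=; rewrite leqnn.
  apply/andP; split.
    by case: (row_cases i') shared => -> /andP[a b]; rewrite /= a b ?orbT.
  move: no_pool => /forallP/(_ j)/forallP/(_ j')/implyP; rewrite jE eqxx => /(_ isT).
  apply: contra => /and4P[a0 a1 b0 b1]; apply/forallP => i0.
  by case: (row_cases i0) => ->; apply/andP.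
apply/andP; split.
  apply/forallP => x; apply/forallP => y; apply/implyP => /andP[fx fy].
  have [x' x'E /andP[fx' xx']] := connect_last_column steps fx.
  have [y' y'E /andP[fy' yy']] := connect_last_column steps fy.
  have x'y' : x' = y'.
    case: x' y' x'E y'E fx' fy' {xx' yy'} => [i1 j1] [i2 j2] /= E1 E2.
    have [-> ->] : j1 = jl /\ j2 = jl by split; apply: val_inj; rewrite /= ?E1 ?E2.
    by move=> f1 f2; rewrite (single_column_row single_jl f1 f2).
  by apply: connect_trans xx' _; rewrite x'y' connect_water_sym.
apply/forallP => j; apply/forallP => j'; apply/implyP => /eqP jE.
apply/negP => /forallP full; move: (steps j j' jE).
have /andP[a0 b0] := full row0; have /andP[a1 b1] := full row1.
by rewrite /step /wet /link /= a0 a1 b0 b1.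
Qed.

End Grid.

Definition coloring_of_columns k (t : k.-tuple col) : coloring k :=
  [ffun x => if x.1 == row0 then (tnth t x.2).1 else (tnth t x.2).2].

Lemma columnsK k : cancel (@columns k) (@coloring_of_columns k).
Proof.
move=> f; apply/ffunP => -[i j]; rewrite ffunE tnth_mktuple /column /=.
by case: (row_cases i) => ->.
Qed.

Lemma coloring_of_columnsK k : cancel (@coloring_of_columns k) (@columns k).
Proof.
by move=> t; apply: eq_from_tnth => j; rewrite tnth_mktuple /column !ffunE /=; case: (tnth t j).
Qed.

Lemma N_k1E k : N_k1 k = 2 ^ k.+1 - 2.
Proof.
rewrite /N_k1 -walks_dry /walks -(on_card_preimset (f := @columns k)).
  by apply: eq_card => f; rewrite !inE nurikabe_last1E.
by exists (@coloring_of_columns k) => t _; [apply: columnsK | apply: coloring_of_columnsK].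
Qed.

Local Open Scope ring_scope.

Theorem lemma3p2 :
  [/\ N_k1 1 = 2%N, N_k1 2 = 6%N, N_k1 3 = 14%N &
      forall k : nat, (4 <= k)%N ->
        (N_k1 k)%:Z = 2 * (N_k1 (k - 1)%N)%:Z + (N_k1 (k - 2)%N)%:Z - 2 * (N_k1 (k - 3)%N)%:Z].
Proof.
split; rewrite ?N_k1E // => k k_ge4.
have [m ->] : exists m, k = (m + 4)%N by exists (k - 4)%N; lia.
rewrite !N_k1E !(addnK, addnS, addn0) /= !expnS.
have := expn_gt0 2 m; lia.
Qed.
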